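(* Let $\mathcal{A}$ be a set of $N$ arms and let $1\le B\le N$. Consider any deterministic algorithm which, in each round $t=1,\dots,T$, chooses a subset $S_t\subset\mathcal{A}$ with $|S_t|=B$ as a function of the previously revealed cost functions $c_1,\dots,c_{t-1}$ (full feedback). Then its worst-case regret satisfies \[R_T^*\ \ge\ \left(1-\frac{B}{N}\right)T.\]
   Context: In each round $t\in[T]$ an (oblivious) adversary fixes a cost function $c_t:\mathcal{A}\to[0,1]$; the algorithm picks $S_t\subset\mathcal{A}$, $|S_t|=B$, and incurs cost $c_t(S_t):=\min_{a\in S_t}c_t(a)$; in the full feedback setting the whole function $c_t$ is then revealed. For an algorithm $\mathbf{ALG}$ the worst-case expected regret is $R_T^*(\mathbf{ALG}):=\max_{c_1,\dots,c_T}\mathbb{E}\left[\sum_{t=1}^T c_t(S_t)-\min_{a^*\in\mathcal{A}}\sum_{t=1}^T c_t(a^* )\right]$, the expectation being over the algorithm's randomness. *)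

From mathcomp Require Import all_boot all_order all_algebra.
Set Implicit Arguments. Unset Strict Implicit. Unset Printing Implicit Defensive.
Import Order.TTheory GRing.Theory Num.Theory.
Local Open Scope ring_scope.

(* Rounds are indexed by t : 'I_T (round t+1 of the paper).
   A cost sequence assigns to each round a cost function A -> R. *)
Definition costs (R : realFieldType) (A : finType) (T : nat) := 'I_T -> A -> R.

Definition unit_costs (R : realFieldType) (A : finType) (T : nat)
  (c : 'I_T -> A -> R) : Prop :=
  forall t a, 0 <= c t a <= 1.

Definition history (R : realFieldType) (A : finType) (t : nat) := 'I_t -> A -> R.

Definition unit_history (R : realFieldType) (A : finType) (t : nat)
  (h : history R A t) : Prop :=
  forall s a, 0 <= h s a <= 1.

Definition det_alg (R : realFieldType) (A : finType) (T : nat) :=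
  forall t : 'I_T, history R A t -> {set A}.

Definition picks_B (R : realFieldType) (A : finType) (T B : nat)
  (alg : det_alg R A T) : Prop :=
  forall (t : 'I_T) (h : history R A t), unit_history h -> #|alg t h| = B.

Definition hist_of (R : realFieldType) (A : finType) (T : nat)
  (c : 'I_T -> A -> R) (t : 'I_T) : history R A t :=
  fun s => c (widen_ord (ltnW (ltn_ord t)) s).

Definition played (R : realFieldType) (A : finType) (T : nat)
  (alg : det_alg R A T) (c : 'I_T -> A -> R) (t : 'I_T) : {set A} :=
  alg t (@hist_of R A T c t).

(* Cost of a set S: min_{a in S} f a.  The neutral element 1 is harmless since
   costs lie in [0,1] and S is nonempty (|S| = B >= 1). *)
Definition set_cost (R : realFieldType) (A : finType) (f : A -> R) (S : {set A}) : R :=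
  \big[Num.min/1]_(a in S) f a.

Definition arm_total (R : realFieldType) (A : finType) (T : nat)
  (c : 'I_T -> A -> R) (a : A) : R := \sum_(t < T) c t a.

(* min_{a_star} sum_t c_t(a_star); neutral element T is harmless since every arm's total
   cost is at most T when costs lie in [0,1] and A is nonempty. *)
Definition best_arm_total (R : realFieldType) (A : finType) (T : nat)
  (c : 'I_T -> A -> R) : R := \big[Num.min/T%:R]_(a : A) arm_total c a.

Definition regret (R : realFieldType) (A : finType) (T : nat)
  (alg : det_alg R A T) (c : 'I_T -> A -> R) : R :=
  \sum_(t < T) set_cost (c t) (played alg c t) - best_arm_total c.

(** Against a deterministic algorithm the adversary can simulate the
    algorithm and charge cost 1 exactly to the B arms it is about to play,
    and cost 0 to all others.  The algorithm then pays 1 in every round,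
    while the total cost of all arms over the T rounds is T B, so some arm
    has total cost at most T B / N.  Since the algorithm is deterministic,
    this adaptive adversary is realized by a single fixed cost sequence. *)
From mathcomp Require Import all_boot all_order all_algebra.
From Stdlib Require Import FunctionalExtensionality.
Import Order.TTheory GRing.Theory Num.Theory.
Local Open Scope ring_scope.

Section AdaptiveCosts.
Context {R : realFieldType} {A : finType} {T : nat}.
Variable resp : forall t : 'I_T, history R A t -> A -> R.

(* The history type depends on the round, so the costs are built by recursion
   on the number of rounds: [adaptive_prefix n] holds the cost functions of
   the rounds [< n], indexed by [nat], with junk [0] at indices [>= n]. *)
Definition adaptive_step (n : nat) (g : nat -> A -> R) : A -> R :=
  if @insub nat (fun k => k < T)%N 'I_T n is Some t
  then resp t (fun s : 'I_t => g (val s)) else fun _ => 0.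

Fixpoint adaptive_prefix (n : nat) : nat -> A -> R :=
  if n is m.+1 then
    fun i => if i == m then adaptive_step m (adaptive_prefix m)
             else adaptive_prefix m i
  else fun _ _ => 0.

Lemma adaptive_prefix_stable {i m} :
  (i < m)%N -> adaptive_prefix m i = adaptive_prefix i.+1 i.
Proof.
elim: m => [|m IH] //=; rewrite ltnS leq_eqVlt => /orP[/eqP ->|lt_im].
  by rewrite eqxx.
by rewrite (ltn_eqF lt_im) IH.
Qed.

Definition adaptive_costs : 'I_T -> A -> R := fun t => adaptive_prefix T t.

Lemma hist_of_adaptive_costs (t : 'I_T) :
  @hist_of _ _ _ adaptive_costs t = fun s : 'I_t => adaptive_prefix t (val s).
Proof.
apply: functional_extensionality => s.
have lt_sT : (s < T)%N by apply: ltn_trans (ltn_ord s) (ltn_ord t).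
by rewrite /hist_of /adaptive_costs /= (adaptive_prefix_stable lt_sT)
           -(adaptive_prefix_stable (ltn_ord s)).
Qed.

Lemma adaptive_costsE (t : 'I_T) :
  adaptive_costs t = resp t (@hist_of _ _ _ adaptive_costs t).
Proof.
rewrite hist_of_adaptive_costs /adaptive_costs.
by rewrite (adaptive_prefix_stable (ltn_ord t)) /= eqxx /adaptive_step valK.
Qed.

End AdaptiveCosts.

Definition played_indicator {R : realFieldType} {A : finType} {T : nat}
    (alg : det_alg R A T) (t : 'I_T) (h : history R A t) (a : A) : R :=
  (a \in alg t h)%:R.

Definition simulating_adversary {R : realFieldType} {A : finType} {T : nat}
    (alg : det_alg R A T) : 'I_T -> A -> R :=
  adaptive_costs (played_indicator alg).

Section CostBounds.
Context {R : realFieldType} {A : finType}.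

Lemma sum_indicator (S : {set A}) : \sum_(a : A) (a \in S)%:R = #|S|%:R :> R.
Proof. by rewrite -natr_sum -sum1_card [in RHS]big_mkcond. Qed.

Lemma set_cost_eq1 (f : A -> R) (S : {set A}) :
  {in S, forall a, f a = 1} -> set_cost f S = 1.
Proof.
move=> f1; rewrite /set_cost; apply: (big_ind (fun x => x = 1)) => //.
by move=> x y -> ->; rewrite minxx.
Qed.

Lemma card_mul_best_arm_total_le {T : nat} (c : 'I_T -> A -> R) :
  #|A|%:R * best_arm_total c <= \sum_(t < T) \sum_(a : A) c t a.
Proof.
rewrite mulr_natl -sumr_const /best_arm_total exchange_big /=.
by apply: ler_sum => a _; apply: bigmin_le.
Qed.

End CostBounds.

Section SimulatingAdversary.
Context {R : realFieldType} {A : finType} {T : nat} {alg : det_alg R A T}.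
Local Notation c := (simulating_adversary alg).

Lemma simulating_adversaryE t a : c t a = (a \in played alg c t)%:R.
Proof. by rewrite /simulating_adversary adaptive_costsE. Qed.

Lemma unit_costs_simulating_adversary : unit_costs c.
Proof. by move=> t a; rewrite simulating_adversaryE ler0n lern1 leq_b1. Qed.

Lemma alg_cost_simulating_adversary :
  \sum_(t < T) set_cost (c t) (played alg c t) = T%:R.
Proof.
have -> : T%:R = \sum_(t < T) 1 :> R by rewrite sumr_const card_ord.
by apply: eq_bigr => t _; apply: set_cost_eq1 => a; rewrite simulating_adversaryE => ->.
Qed.

Context {B : nat}.
Hypothesis alg_picks_B : picks_B B alg.

Lemma card_played_simulating_adversary t : #|played alg c t| = B.
Proof. by apply: alg_picks_B => s a; apply: unit_costs_simulating_adversary. Qed.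

Lemma best_arm_total_simulating_adversary :
  #|A|%:R * best_arm_total c <= (T * B)%:R.
Proof.
apply: le_trans (card_mul_best_arm_total_le c) _.
have -> : (T * B)%:R = \sum_(t < T) B%:R :> R.
  by rewrite sumr_const card_ord natrM mulr_natl.
apply: ler_sum => t _; under eq_bigr do rewrite simulating_adversaryE.
by rewrite sum_indicator card_played_simulating_adversary.
Qed.

End SimulatingAdversary.

Theorem proposition1 (R : realFieldType) (A : finType) (N B T : nat)
  (hN : #|A| = N) (hB1 : (1 <= B)%N) (hBN : (B <= N)%N)
  (alg : det_alg R A T) (halg : picks_B B alg) :
  exists c : 'I_T -> A -> R,
    unit_costs c /\ (1 - B%:R / N%:R) * T%:R <= regret alg c.
Proof.
exists (simulating_adversary alg); split; first exact: unit_costs_simulating_adversary.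
have N_gt0 : 0 < N%:R :> R by rewrite ltr0n (leq_trans hB1 hBN).
rewrite /regret alg_cost_simulating_adversary mulrBl mul1r lerB //.
rewrite mulrAC ler_pdivlMr // mulrC -natrM mulnC -hN.
exact: best_arm_total_simulating_adversary halg.
Qed.
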